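(* Let $m,n$ be natural numbers with $m\geqslant3$, and let $c_1,C_1$ be positive constants. Let $(\psi_1,\dots,\psi_m)=\Psi:\mathbb{R}^n\to\mathbb{R}^m$ be a system of homogeneous linear forms whose coefficients are bounded in absolute value by $C_1$, and suppose $\Psi$ has $c_1$-Cauchy–Schwarz complexity $s$ for some finite $s$. Then for each $i\in[m]$ there is an extension $\Psi':\mathbb{R}^{n'}\to\mathbb{R}^m$ of $\Psi$ such that: (1) $n'=n+s+1\leqslant n+m-1$; (2) $\Psi'(\mathbf u,w_1,\dots,w_{s+1})=\Psi(\mathbf u+w_1\mathbf f_1+\dots+w_{s+1}\mathbf f_{s+1})$ for some vectors $\mathbf f_k\in\mathbb{R}^n$ with $\Vert\mathbf f_k\Vert_\infty=O_{c_1,C_1}(1)$ for every $k$; (3) $\Psi'$ is in normal form with respect to $\psi'_i$; (4) $\psi'_i(\mathbf0,\mathbf w)=w_1+\dots+w_{s+1}$.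
   Context: A linear map $\Psi:\mathbb{R}^n\to\mathbb{R}^m$ is viewed as a system of homogeneous linear forms $(\psi_1,\dots,\psi_m)$ (its coordinate functions) and identified with its $m\times n$ matrix; $\operatorname{dist}$ is $\ell^\infty$ distance between matrices (entries as coordinates). Normal form: $\Psi$ is in normal form with respect to $\psi_i$ if there is an integer $t\geqslant0$ and a set $J_i$ of $t+1$ standard basis vectors of $\mathbb{R}^n$ such that $\prod_{\mathbf e\in J_i}\psi_{i'}(\mathbf e)$ is non-zero for $i'=i$ and zero for every $i'\neq i$. Extension: $\Psi'=(\psi'_1,\dots,\psi'_m):\mathbb{R}^{n'}\to\mathbb{R}^m$ with $n'\geqslant n$ is an extension of $\Psi$ if $\Psi'(\mathbb{R}^{n'})=\Psi(\mathbb{R}^n)$ and $\Psi$ is the restriction of $\Psi'$ to $\mathbb{R}^n\times\{0\}^{n'-n}$. Suitable partitions: for $i\in[m]$, a partition $\mathcal P_i$ of $[m]\setminus\{i\}$ into disjoint parts $\mathcal C_1,\dots,\mathcal C_{t+1}$ is suitable for $\Psi$ if $\psi_i\notin\mathrm{span}_{\mathbb{R}}(\psi_j:j\in\mathcal C_k)$ for every $k$; $V_{\mathcal P_i}$ denotes the set of all systems $\Psi:\mathbb{R}^n\to\mathbb{R}^m$ for which $\mathcal P_i$ is not suitable. $c_1$-Cauchy–Schwarz complexity: for each $i$, $s_i+1$ is the minimal number of parts of a partition $\mathcal P_i$ of $[m]\setminus\{i\}$ with $\operatorname{dist}(\Psi,V_{\mathcal P_i})\geqslant c_1$ ($s_i=\infty$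 if none exists), and $s=\max(1,\max_is_i)$. $O_{c_1,C_1}(1)$ denotes a bound depending only on $c_1,C_1,m,n$. *)

From HB Require Import structures.
From mathcomp Require Import all_boot all_order all_algebra.
From mathcomp Require Import reals.
Set Implicit Arguments. Unset Strict Implicit. Unset Printing Implicit Defensive.
Import Order.TTheory GRing.Theory Num.Theory.
Local Open Scope ring_scope.

(* A system of m linear forms on R^n is an m x n matrix Psi; psi_i(x) = (Psi *m x) i 0,
   with x a column vector. The i-th form psi_i is the row i of Psi. *)

Definition mxdist {R : realType} {m n : nat} (A B : 'M[R]_(m, n)) : R :=
  \big[Num.max/0]_(i < m) \big[Num.max/0]_(j < n) `|A i j - B i j|.

(* A partition of [m]\{i} into t+1 parts is encoded by p : 'I_m -> 'I_(t.+1)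
   (the value p i is irrelevant); part k is C_k = {j | j != i /\ p j = k}.
   Parts are required to be nonempty. *)
Definition is_partition {m t : nat} (i : 'I_m) (p : 'I_m -> 'I_(t.+1)) : Prop :=
  forall k : 'I_(t.+1), exists j : 'I_m, j != i /\ p j = k.

Definition in_span_part {R : realType} {m n t : nat} (Phi : 'M[R]_(m, n))
    (i : 'I_m) (p : 'I_m -> 'I_(t.+1)) (k : 'I_(t.+1)) : Prop :=
  exists a : 'I_m -> R,
    row i Phi = \sum_(j < m | (j != i) && (p j == k)) a j *: row j Phi.

Definition suitable {R : realType} {m n t : nat} (Phi : 'M[R]_(m, n))
    (i : 'I_m) (p : 'I_m -> 'I_(t.+1)) : Prop :=
  forall k : 'I_(t.+1), ~ in_span_part Phi i p k.

Definition in_V {R : realType} {m n t : nat} (i : 'I_m) (p : 'I_m -> 'I_(t.+1))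
    (Phi : 'M[R]_(m, n)) : Prop := ~ suitable Phi i p.

Definition far_from_V {R : realType} {m n t : nat} (c1 : R) (Psi : 'M[R]_(m, n))
    (i : 'I_m) (p : 'I_m -> 'I_(t.+1)) : Prop :=
  forall Phi : 'M[R]_(m, n), in_V i p Phi -> c1 <= mxdist Psi Phi.

Definition good_partition_exists {R : realType} {m n : nat} (c1 : R)
    (Psi : 'M[R]_(m, n)) (i : 'I_m) (t : nat) : Prop :=
  exists p : 'I_m -> 'I_(t.+1), is_partition i p /\ far_from_V c1 Psi i p.

Definition is_s_i {R : realType} {m n : nat} (c1 : R) (Psi : 'M[R]_(m, n))
    (i : 'I_m) (si : nat) : Prop :=
  good_partition_exists c1 Psi i si /\
  forall t, good_partition_exists c1 Psi i t -> (si <= t)%N.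

Definition CS_complexity {R : realType} {m n : nat} (c1 : R) (Psi : 'M[R]_(m, n))
    (s : nat) : Prop :=
  exists si : 'I_m -> nat, (forall i, is_s_i c1 Psi i (si i)) /\
    s = maxn 1 (\max_(i < m) si i).

Definition is_extension {R : realType} {m n d : nat} (Psi : 'M[R]_(m, n))
    (Psi' : 'M[R]_(m, n + d)) : Prop :=
  (forall y : 'cV[R]_m,
     (exists x' : 'cV[R]_(n + d), y = Psi' *m x') <-> (exists x : 'cV[R]_n, y = Psi *m x)) /\
  (forall x : 'cV[R]_n, Psi' *m col_mx x 0 = Psi *m x).

(* Phi is in normal form with respect to phi_i. Phi(e_j) has i'-coordinate Phi i' j. *)
Definition normal_form {R : realType} {m N : nat} (Phi : 'M[R]_(m, N)) (i : 'I_m) : Prop :=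
  exists t : nat, exists J : {set 'I_N},
    #|J| = t.+1 /\
    (\prod_(j in J) Phi i j != 0) /\
    (forall i' : 'I_m, i' != i -> \prod_(j in J) Phi i' j = 0).

From HB Require Import structures.
From mathcomp Require Import all_boot all_order all_algebra.
From mathcomp Require Import reals.
From mathcomp Require Import zify lra.
Import Order.TTheory GRing.Theory Num.Theory.
Local Open Scope ring_scope.

(* For each part C_k of a partition P_i with dist(Psi, V_P) >= c1, split psi_i
   orthogonally as a combination of the psi_j (j in C_k) plus a residual r.
   Replacing psi_i by that combination gives a system in V_P, so some entry of r
   is at least c1, and then f_k = r / |r|_2^2 satisfies psi_i(f_k) = 1,
   psi_j(f_k) = 0 on C_k and |f_k|_oo <= 1/c1 (so K = 1/c1, whatever C1 is).
   With f_k repeated up to s + 1 vectors, Psi'(u, w) = Psi(u + sum_k w_k f_k)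
   is in normal form for psi'_i on the new coordinates: psi'_i is 1 on each of
   them, while every psi'_j, j <> i, vanishes on the column of its own part. *)

Section OrthogonalProjection.
Context {R : realFieldType}.

Lemma mulmx_tr_selfE {n : nat} (r : 'rV[R]_n) : (r *m r^T) 0 0 = \sum_l r 0 l ^+ 2.
Proof. by rewrite mxE; apply: eq_bigr => l _; rewrite mxE expr2. Qed.

Lemma mulmx_tr_self_eq0 {n : nat} (r : 'rV[R]_n) : r *m r^T = 0 -> r = 0.
Proof.
move=> /(congr1 (fun M : 'M_1 => M 0 0)); rewrite mulmx_tr_selfE mxE => /eqP.
rewrite psumr_eq0 => [/allP r0|l _]; last exact: sqr_ge0.
by apply/rowP => l; rewrite mxE; apply/eqP; rewrite -sqrf_eq0; apply: implyP (r0 l _) _.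
Qed.

Lemma row_orthogonal_decomposition {p n : nat} (A : 'M[R]_(p, n)) (a : 'rV[R]_n) :
  exists (x : 'rV_p) (r : 'rV_n), a = x *m A + r /\ r *m A^T = 0.
Proof.
set K := kermx A^T.
have AcapK : (A :&: K)%MS = 0.
  apply/eqP; rewrite -submx0; apply/rV_subP => z.
  rewrite sub_capmx => /andP[/submxP[x ->] /sub_kermxP xAAT].
  rewrite submx0; apply/eqP/mulmx_tr_self_eq0.
  by rewrite trmx_mul mulmxA xAAT mul0mx.
have : (a <= A + K)%MS.
  apply: submx_full; rewrite /row_full.
  have := mxrank_sum_cap A K; rewrite AcapK mxrank0 addn0 mxrank_ker mxrank_tr.
  by have := rank_leq_col A; lia.
case/sub_addsmxP => [[x y]] /= ->; exists x, (y *m K); split=> //.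
by rewrite -mulmxA mulmx_ker mulmx0.
Qed.

Lemma mulmx_tr_self_gt0 {n : nat} (r : 'rV[R]_n) : r != 0 -> 0 < (r *m r^T) 0 0.
Proof.
move=> r0; rewrite lt_def mulmx_tr_selfE sumr_ge0 ?andbT => [|l _]; last exact: sqr_ge0.
apply: contra r0 => /eqP S0; apply/eqP/mulmx_tr_self_eq0.
by apply/rowP => a; rewrite ord1 [RHS]mxE mulmx_tr_selfE.
Qed.

Definition dual_vector {n : nat} (r : 'rV[R]_n) : 'cV[R]_n :=
  ((r *m r^T) 0 0)^-1 *: r^T.

Lemma dual_vectorK {n : nat} (r : 'rV[R]_n) : r != 0 -> (r *m dual_vector r) 0 0 = 1.
Proof. by move=> /mulmx_tr_self_gt0 S0; rewrite -scalemxAr mxE mulVf ?gt_eqF. Qed.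

Lemma mul_dual_vector_eq0 {p n : nat} (A : 'M[R]_(p, n)) (r : 'rV[R]_n) :
  A *m r^T = 0 -> A *m dual_vector r = 0.
Proof. by move=> Ar0; rewrite -scalemxAr Ar0 scaler0. Qed.

Lemma dual_vector_bound {n : nat} (r : 'rV[R]_n) (c : R) (j : 'I_n) :
  0 < c -> c <= `|r 0 j| -> forall l, `|dual_vector r l 0| <= c^-1.
Proof.
move=> c0 crj l.
have r0 : r != 0 by apply: contraTneq crj => ->; rewrite mxE normr0 -ltNge.
have S0 := mulmx_tr_self_gt0 r r0; set S := (r *m r^T) 0 0 in S0 *.
have sqr_le_S a : `|r 0 a| ^+ 2 <= S.
  rewrite real_normK ?num_real // /S mulmx_tr_selfE (bigD1 a) //= lerDl.
  by apply: sumr_ge0 => b _; apply: sqr_ge0.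
have rl_le_S : `|r 0 l| * c <= S.
  have := sqr_le_S l; have := sqr_le_S j; have := normr_ge0 (r 0 l).
  by case: (leP c `|r 0 l|); nra.
rewrite /dual_vector mxE [r^T _ _]mxE -/S normrM ger0_norm ?invr_ge0 ?(ltW S0) //.
by rewrite mulrC ler_pdivrMr // mulrC ler_pdivlMr.
Qed.

End OrthogonalProjection.

Lemma is_partition_card {m t : nat} {i : 'I_m} {p : 'I_m -> 'I_t.+1} :
  is_partition i p -> (t.+1 <= m.-1)%N.
Proof.
move=> /fin_all_exists[w wP].
have w_inj : injective w by move=> a b wab; rewrite -(proj2 (wP a)) wab (proj2 (wP b)).
rewrite -[t.+1]card_ord -(card_imset _ w_inj) -[m in (_ <= m.-1)%N]card_ord -(cardsC1 i).
by apply: subset_leq_card; apply/subsetP => _ /imsetP[k _ ->]; rewrite !inE (proj1 (wP k)).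
Qed.

Section CauchySchwarzComplexity.
Context {R : realType} {m n : nat} {c1 : R} {Psi : 'M[R]_(m, n)} {s : nat}.
Hypothesis cs : CS_complexity c1 Psi s.

Lemma CS_complexity_lt : (3 <= m)%N -> (s.+1 <= m.-1)%N.
Proof.
case: cs => si [siP ->] m_ge3.
suff : (\max_(j < m) si j <= m.-2)%N by rewrite /maxn; case: ifP; lia.
apply/bigmax_leqP => j _; have [[pj [pj_part _]] _] := siP j.
by have := is_partition_card pj_part; lia.
Qed.

Lemma CS_complexity_partition (i : 'I_m) :
  exists (t : nat) (p : 'I_m -> 'I_t.+1), (t <= s)%N /\ far_from_V c1 Psi i p.
Proof.
case: cs => si [siP ->]; have [[p [_ far]] _] := siP i.
exists (si i), p; split=> //.
by apply: leq_trans (leq_maxr 1 _); apply: leq_bigmax.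
Qed.

End CauchySchwarzComplexity.

Lemma mxdist_lt {R : realType} {m n : nat} (A B : 'M[R]_(m, n)) (c : R) :
  0 < c -> (forall a l, `|A a l - B a l| < c) -> mxdist A B < c.
Proof.
move=> c0 lt_c; rewrite /mxdist.
elim/big_ind: _ => // [x y xc yc|a _]; first by rewrite gt_max xc yc.
by elim/big_ind: _ => // x y xc yc; rewrite gt_max xc yc.
Qed.

Section PartDualVector.
Context {R : realType} {m n t : nat} {Psi : 'M[R]_(m, n)}.
Context {i : 'I_m} {p : 'I_m -> 'I_t.+1}.

Definition part_mx (k : 'I_t.+1) : 'M[R]_(m, n) :=
  \matrix_(j, l) if (j != i) && (p j == k) then Psi j l else 0.

Definition row_replace (v : 'rV[R]_n) : 'M[R]_(m, n) :=
  \matrix_(a, l) if a == i then v 0 l else Psi a l.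

Lemma in_V_row_replace (k : 'I_t.+1) (x : 'rV[R]_m) :
  in_V i p (row_replace (x *m part_mx k)).
Proof.
move=> suit; apply: (suit k); exists (fun j => x 0 j).
apply/rowP => l; rewrite !mxE eqxx summxE [RHS]big_mkcond /=.
apply: eq_bigr => j _; rewrite !mxE.
by case: ifP => [/andP[/negPf -> _]|_]; rewrite ?mulr0 ?mxE.
Qed.

Lemma part_dual_vector {c1 : R} : 0 < c1 -> far_from_V c1 Psi i p ->
  forall k : 'I_t.+1, exists g : 'cV[R]_n,
    [/\ forall l, `|g l 0| <= c1^-1, (Psi *m g) i 0 = 1
      & forall j, j != i -> p j = k -> (Psi *m g) j 0 = 0].
Proof.
move=> c1_gt0 far k; set A := part_mx k.
have [x [r [Psi_i rA]]] := row_orthogonal_decomposition A (row i Psi).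
have [l c1_rl] : exists l, c1 <= `|r 0 l|.
  apply/existsP; apply: contraTT (far _ (in_V_row_replace k x)) => /existsPn r_small.
  rewrite -ltNge; apply: mxdist_lt => // a l; rewrite [row_replace _ _ _]mxE; case: eqP => [->|_].
    have /rowP/(_ l) := Psi_i; rewrite mxE [in RHS]mxE => ->.
    by rewrite addrAC subrr add0r ltNge r_small.
  by rewrite subrr normr0.
have Ag : A *m dual_vector r = 0.
  by apply: mul_dual_vector_eq0; rewrite -[A]trmxK -trmx_mul rA trmx0.
have r0 : r != 0 by apply: contraTneq c1_rl => ->; rewrite mxE normr0 -ltNge.
have row_entry a : (Psi *m dual_vector r) a 0 = (row a Psi *m dual_vector r) 0 0.
  by rewrite -row_mul [in RHS]mxE.
exists (dual_vector r); split; first exact: dual_vector_bound c1_rl.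
  by rewrite row_entry Psi_i mulmxDl -mulmxA Ag mulmx0 add0r dual_vectorK.
move=> j ji pj; rewrite row_entry.
have -> : row j Psi = row j A by apply/rowP => b; rewrite !mxE ji pj eqxx.
by rewrite -row_mul Ag !mxE.
Qed.

End PartDualVector.

Section ExtensionThroughColumns.
Context {R : realType} {m n d : nat} {Psi : 'M[R]_(m, n)} {F : 'M[R]_(n, d)}.

Lemma row_mx_mul_col_mx (u : 'cV[R]_n) (w : 'cV[R]_d) :
  row_mx Psi (Psi *m F) *m col_mx u w = Psi *m (u + F *m w).
Proof. by rewrite mul_row_col mulmxDr mulmxA. Qed.

Lemma is_extension_row_mx : is_extension Psi (row_mx Psi (Psi *m F)).
Proof.
split=> [y|x]; last by rewrite row_mx_mul_col_mx mulmx0 addr0.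
split=> [[x ->]|[x ->]]; last by exists (col_mx x 0); rewrite row_mx_mul_col_mx mulmx0 addr0.
by exists (usubmx x + F *m dsubmx x); rewrite -{1}(vsubmxK x) row_mx_mul_col_mx.
Qed.

End ExtensionThroughColumns.

Lemma normal_form_rshift {R : realType} {m n d : nat} (Phi : 'M[R]_(m, n + d.+1)) (i : 'I_m) :
  (forall k, Phi i (rshift n k) != 0) ->
  (forall i', i' != i -> exists k, Phi i' (rshift n k) = 0) -> normal_form Phi i.
Proof.
move=> Phi_i Phi_i'; exists d, [set rshift n k | k : 'I_d.+1]; split; last split.
- by rewrite card_imset ?card_ord //; apply: rshift_inj.
- by apply/prodf_neq0 => _ /imsetP[k _ ->].
- move=> i' /Phi_i'[k Phi_i'k]; apply/eqP/prodf_eq0.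
  by exists (rshift n k); rewrite ?imset_f ?Phi_i'k.
Qed.

Theorem proposition6p7 (R : realType) (m n : nat) (hm : (3 <= m)%N)
    (c1 C1 : R) (hc1 : 0 < c1) (hC1 : 0 < C1) :
  exists K : R,
  forall Psi : 'M[R]_(m, n),
    (forall (i : 'I_m) (j : 'I_n), `|Psi i j| <= C1) ->
  forall s : nat, CS_complexity c1 Psi s ->
  forall i : 'I_m,
  exists (Psi' : 'M[R]_(m, n + s.+1)) (f : 'I_s.+1 -> 'cV[R]_n),
    [/\ (n + s.+1 <= n + m - 1)%N /\ is_extension Psi Psi',
        (forall k : 'I_s.+1, forall j : 'I_n, `|f k j 0| <= K),
        (forall (u : 'cV[R]_n) (w : 'cV[R]_s.+1),
           Psi' *m col_mx u w = Psi *m (u + \sum_(k < s.+1) w k 0 *: f k)),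
        normal_form Psi' i
      & forall w : 'cV[R]_s.+1, (Psi' *m col_mx 0 w) i 0 = \sum_(k < s.+1) w k 0].
Proof.
exists c1^-1 => Psi _ s cs i.
have [t [p [le_ts far]]] := CS_complexity_partition cs i.
have [g gP] := fin_all_exists (part_dual_vector hc1 far).
pose f (k : 'I_s.+1) := g (inord k).
pose F := \matrix_(j, k) f k j 0.
have FwE w : F *m w = \sum_k w k 0 *: f k.
  by apply/colP => j; rewrite !mxE summxE; apply: eq_bigr => k _; rewrite !mxE mulrC.
have PsiFE a k : (Psi *m F) a k = (Psi *m f k) a 0.
  by rewrite !mxE; apply: eq_bigr => j _; rewrite mxE.
exists (row_mx Psi (Psi *m F)), f; split.
- by split; [have := CS_complexity_lt cs hm; lia | apply: is_extension_row_mx].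
- by move=> k; case: (gP (inord k)).
- by move=> u w; rewrite row_mx_mul_col_mx FwE.
- apply: normal_form_rshift => [k|i' i'i].
    by rewrite row_mxEr PsiFE; case: (gP (inord k)) => _ -> _; apply: oner_neq0.
  (* [inord] sends the surplus indices k > t to 0, so those columns repeat f_0. *)
  have le_ts1 : (t.+1 <= s.+1)%N := le_ts.
  exists (widen_ord le_ts1 (p i')); rewrite row_mxEr PsiFE /f.
  have -> : inord (widen_ord le_ts1 (p i')) = p i' by exact: inord_val.
  by case: (gP (p i')) => _ _ ->.
- move=> w; rewrite row_mx_mul_col_mx add0r FwE mulmx_sumr summxE.
  by apply: eq_bigr => k _; rewrite -scalemxAr mxE; case: (gP (inord k)) => _ -> _; rewrite mulr1.
Qed.
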